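(* Let $m$ be a positive integer, $T=\{1,2\}^m$, and $d$ an integer with $4\le d\le m/2$. Then for every $r\in T$, the number of vectors $s\in T\setminus\{r\}$ with $d_{\mathrm{ERP}}(r,s)\le d$ is less than $\big(\frac{3em}{d}\big)^{2d}$.
   Context: Edit Distance with Real Penalty (ERP): for finite real sequences $r,s$ (possibly of different lengths), let $m'$ be the length of the longer one. A gap insertion inserts a zero-valued coordinate at any position. For $p\ge m'$ let $R_p$ (resp. $S_p$) be the set of length-$p$ sequences obtainable from $r$ (resp. $s$) by gap insertions. Then $d_{\mathrm{ERP}}(r,s)=\min_{p\ge m',\ \tilde r\in R_p,\ \tilde s\in S_p}\|\tilde r-\tilde s\|_1$. *)

From Stdlib Require Import Reals List.
Import ListNotations.
Open Scope R_scope.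

(* gap_ins r r' : r' is obtainable from r by inserting zero-valued
   coordinates at arbitrary positions (gap insertions). *)
Inductive gap_ins : list R -> list R -> Prop :=
| gi_nil : gap_ins [] []
| gi_gap : forall r r', gap_ins r r' -> gap_ins r (0 :: r')
| gi_keep : forall x r r', gap_ins r r' -> gap_ins (x :: r) (x :: r').

(* L1 distance of two sequences (used on sequences of equal length). *)
Definition l1_dist (a b : list R) : R :=
  fold_right Rplus 0 (map (fun q => Rabs (fst q - snd q)) (combine a b)).

(* Candidates in the minimum defining d_ERP: p >= m' (max length),
   rt in R_p, st in S_p. *)
Definition erp_candidate (r s : list R) (p : nat) (rt st : list R) : Prop :=
  (Nat.max (length r) (length s) <= p)%nat /\
  gap_ins r rt /\ length rt = p /\ gap_ins s st /\ length st = p.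

(* erp_is r s v : v = d_ERP(r,s), i.e. v is the minimum of ||rt - st||_1
   over all candidates (attained and a lower bound). *)
Definition erp_is (r s : list R) (v : R) : Prop :=
  (exists p rt st, erp_candidate r s p rt st /\ l1_dist rt st = v) /\
  (forall p rt st, erp_candidate r s p rt st -> v <= l1_dist rt st).

Definition in_T (m : nat) (x : list R) : Prop :=
  length x = m /\ Forall (fun a => a = 1 \/ a = 2) x.

From Stdlib Require Import Reals List Lra Lia Psatz Arith.
Import ListNotations.
Open Scope R_scope.

(* In an optimal ERP alignment of r and s
   every column is a gap/gap column or a match (cost 0), or an insertion, a
   deletion or a substitution; since all entries lie in {0,1,2}, each of the
   latter costs at least 1.  Hence d_ERP(r,s) <= d means s arises from r by at
   most d edit operations.  We enumerate these sequences explicitly by a list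
   [edit_ball d r] (every insertion/substitution choosing a symbol of {1,2}),
   prove that it contains every such s, and that its length is at most
   5^d * C(m+d, d) by Pascal's rule.  Finally C(n,k) k! <= n^k and
   k^k <= e^k k! give 5^d C(m+d,d) <= (5e(m+d)/d)^d, and
   5e(m+d)/d < (3em/d)^2 whenever 1 <= d <= m/2. *)

Definition symbol (a : R) : Prop := a = 1 \/ a = 2.

(* Two distinct entries of padded sequences differ by at least 1: this is the
   cost of every non-trivial alignment column. *)
Lemma padded_cost (a b : R) :
  (a = 0 \/ symbol a) -> (b = 0 \/ symbol b) -> a <> b -> 1 <= Rabs (a - b).
Proof.
  intros Ha Hb Hab.
  destruct Ha as [-> | [-> | ->]], Hb as [-> | [-> | ->]];
    try (exfalso; lra); unfold Rabs; destruct (Rcase_abs _); lra.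
Qed.

(* A column of cost at least 1 consumes one unit of an integer budget. *)
Lemma spend_unit (x y : R) (c : nat) :
  1 <= x -> 0 <= y -> x + y <= INR c -> exists c', c = S c' /\ y <= INR c'.
Proof.
  intros Hx Hy Hc. destruct c as [|c'].
  - simpl in Hc. lra.
  - exists c'. rewrite S_INR in Hc. split; [reflexivity | lra].
Qed.

Definition grow (L : list (list R)) : list (list R) :=
  map (cons 1) L ++ map (cons 2) L.

(* [edit_ball c r] lists (with repetitions) the sequences obtained from r by
   at most c edits.  With budget c+1 and r = x :: r', the first symbol is
   either kept (same budget), deleted, substituted, or preceded by an
   inserted symbol; the last three consume one unit.  The recursion is
   lexicographic in (c, r). *)
Fixpoint edit_ball (c : nat) (r : list R) : list (list R) :=
  match c with
  | O => [r]
  | S c' =>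
    (fix ball_succ (r : list R) : list (list R) :=
      match r with
      | [] => [] :: grow (edit_ball c' [])
      | x :: r' => map (cons x) (ball_succ r') ++ edit_ball c' r'
                   ++ grow (edit_ball c' r') ++ grow (edit_ball c' (x :: r'))
      end) r
  end.

Lemma edit_ball_succ_nil (c : nat) :
  edit_ball (S c) [] = [] :: grow (edit_ball c []).
Proof. reflexivity. Qed.

Lemma edit_ball_succ_cons (c : nat) (x : R) (r : list R) :
  edit_ball (S c) (x :: r) =
  map (cons x) (edit_ball (S c) r) ++ edit_ball c r
    ++ grow (edit_ball c r) ++ grow (edit_ball c (x :: r)).
Proof. reflexivity. Qed.

Lemma in_grow (b : R) (s : list R) (L : list (list R)) :
  symbol b -> In s L -> In (b :: s) (grow L).
Proof.
  intros [-> | ->] Hs; apply in_or_app; [left | right]; apply in_map; exact Hs.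
Qed.

Lemma ball_keep (c : nat) (x : R) (r s : list R) :
  In s (edit_ball c r) -> In (x :: s) (edit_ball c (x :: r)).
Proof.
  destruct c as [|c]; intros Hs.
  - destruct Hs as [-> | []]. now left.
  - rewrite edit_ball_succ_cons. apply in_or_app; left. now apply in_map.
Qed.

Lemma ball_delete (c : nat) (x : R) (r s : list R) :
  In s (edit_ball c r) -> In s (edit_ball (S c) (x :: r)).
Proof.
  intros Hs. rewrite edit_ball_succ_cons.
  apply in_or_app; right. apply in_or_app; left. exact Hs.
Qed.

Lemma ball_subst (c : nat) (x b : R) (r s : list R) :
  symbol b -> In s (edit_ball c r) -> In (b :: s) (edit_ball (S c) (x :: r)).
Proof.
  intros Hb Hs. rewrite edit_ball_succ_cons.
  do 2 (apply in_or_app; right). apply in_or_app; left. now apply in_grow.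
Qed.

Lemma ball_insert (c : nat) (b : R) (r s : list R) :
  symbol b -> In s (edit_ball c r) -> In (b :: s) (edit_ball (S c) r).
Proof.
  intros Hb Hs. destruct r as [|x r].
  - rewrite edit_ball_succ_nil. right. now apply in_grow.
  - rewrite edit_ball_succ_cons. do 3 (apply in_or_app; right). now apply in_grow.
Qed.

Lemma l1_dist_cons (x y : R) (a b : list R) :
  l1_dist (x :: a) (y :: b) = Rabs (x - y) + l1_dist a b.
Proof. reflexivity. Qed.

Lemma l1_dist_nonneg (a b : list R) : 0 <= l1_dist a b.
Proof.
  revert b; induction a as [|x a IH]; intros [|y b]; try (unfold l1_dist; simpl; lra).
  rewrite l1_dist_cons. pose proof (Rabs_pos (x - y)). pose proof (IH b). lra.
Qed.

Lemma gap_ins_head (r : list R) (a : R) (rt' : list R) :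
  Forall symbol r -> gap_ins r (a :: rt') ->
  (a = 0 /\ gap_ins r rt') \/
  (exists r', r = a :: r' /\ symbol a /\ Forall symbol r' /\ gap_ins r' rt').
Proof.
  intros Fr G. inversion G as [|? ? G'|x r' ? G']; subst.
  - left. auto.
  - right. inversion Fr; subst. exists r'. auto.
Qed.

Lemma alignment_in_edit_ball (rt st r s : list R) (c : nat) :
  length rt = length st -> gap_ins r rt -> gap_ins s st ->
  Forall symbol r -> Forall symbol s -> l1_dist rt st <= INR c ->
  In s (edit_ball c r).
Proof.
  revert st r s c.
  induction rt as [|a rt IH]; intros [|b st] r s c Hlen Gr Gs Fr Fs Hd;
    try discriminate.
  - inversion Gr; inversion Gs; subst. destruct c; now left.
  - injection Hlen as Hlen. rewrite l1_dist_cons in Hd.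
    pose proof (l1_dist_nonneg rt st) as Hrest.
    assert (Hspend : a <> b -> (a = 0 \/ symbol a) -> (b = 0 \/ symbol b) ->
                     exists c', c = S c' /\ l1_dist rt st <= INR c').
    { intros Hab Ha Hb. exact (spend_unit _ _ _ (padded_cost a b Ha Hb Hab) Hrest Hd). }
    destruct (gap_ins_head r a rt Fr Gr) as [[-> Gr'] | [r' [-> [Ha [Fr' Gr']]]]];
    destruct (gap_ins_head s b st Fs Gs) as [[-> Gs'] | [s' [-> [Hb [Fs' Gs']]]]].
    +
      rewrite Rminus_diag, Rabs_R0 in Hd. apply (IH st); auto. lra.
    +
      destruct Hspend as [c' [-> Hd']]; auto; [destruct Hb; lra|].
      apply ball_insert; auto. apply (IH st); auto.
    +
      destruct Hspend as [c' [-> Hd']]; auto; [destruct Ha; lra|].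
      apply ball_delete. apply (IH st); auto.
    + destruct (Req_dec a b) as [<- | Hab].
      *
        rewrite Rminus_diag, Rabs_R0 in Hd. apply ball_keep. apply (IH st); auto. lra.
      *
        destruct Hspend as [c' [-> Hd']]; auto.
        apply ball_subst; auto. apply (IH st); auto.
Qed.

Fixpoint choose (n k : nat) : nat :=
  match k, n with
  | O, _ => 1%nat
  | S _, O => 0%nat
  | S k', S n' => (choose n' k' + choose n' (S k'))%nat
  end.

Lemma choose_0_r (n : nat) : choose n 0 = 1%nat.
Proof. destruct n; reflexivity. Qed.

Lemma choose_large (n k : nat) : (n < k)%nat -> choose n k = 0%nat.
Proof.
  revert k; induction n as [|n IH]; intros [|k] H; simpl; try lia.
  rewrite !IH; lia.
Qed.

Lemma choose_diag (n : nat) : choose n n = 1%nat.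
Proof. induction n as [|n IH]; simpl; auto. rewrite IH, choose_large; lia. Qed.

Lemma choose_mono_l (n k : nat) : (choose n k <= choose (S n) k)%nat.
Proof. destruct k as [|k]; [rewrite !choose_0_r | simpl]; lia. Qed.

Lemma length_grow (L : list (list R)) : length (grow L) = (2 * length L)%nat.
Proof. unfold grow. rewrite length_app, !length_map. lia. Qed.

(* Cardinality of the enumeration: writing f(c,n) = 5^c C(n+c,c), the
   recursion of [edit_ball] is dominated since f(c+1,n+1) = f(c+1,n) + 5 f(c,n+1)
   and f(c,n) <= f(c,n+1). *)
Lemma edit_ball_length (c : nat) (r : list R) :
  (length (edit_ball c r) <= 5 ^ c * choose (length r + c) c)%nat.
Proof.
  revert r; induction c as [|c IHc]; intros r.
  - simpl. rewrite choose_0_r. lia.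
  - assert (Hpos : (1 <= 5 ^ c)%nat) by (apply Nat.neq_0_lt_0, Nat.pow_nonzero; lia).
    induction r as [|x r IHr].
    + rewrite edit_ball_succ_nil. simpl length. rewrite length_grow.
      specialize (IHc []). simpl length in *. rewrite !choose_diag in *.
      simpl Nat.pow. lia.
    + rewrite edit_ball_succ_cons, !length_app, length_map, !length_grow.
      pose proof (IHc r) as Hr. pose proof (IHc (x :: r)) as Hxr.
      simpl length in *.
      replace (S (length r) + c)%nat with (S (length r + c)) in Hxr by lia.
      replace (length r + S c)%nat with (S (length r + c)) in IHr by lia.
      replace (S (length r) + S c)%nat with (S (S (length r + c))) by lia.
      pose proof (choose_mono_l (length r + c) c).
      change (choose (S (S (length r + c))) (S c))
        with (choose (S (length r + c)) c + choose (S (length r + c)) (S c))%nat.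
      simpl Nat.pow in *. nia.
Qed.

Lemma pow_succ_bernoulli (n k : nat) :
  (n ^ S k + S k * n ^ k <= S n ^ S k)%nat.
Proof.
  induction k as [|k IH]; [simpl; lia|].
  change (n ^ S (S k))%nat with (n * n ^ S k)%nat.
  change (S n ^ S (S k))%nat with (S n * S n ^ S k)%nat.
  change (n ^ S k)%nat with (n * n ^ k)%nat in *.
  nia.
Qed.

(* C(n,k) k! <= n^k: injective k-tuples are among all k-tuples. *)
Lemma choose_mul_fact_le (n k : nat) : (choose n k * fact k <= n ^ k)%nat.
Proof.
  revert k; induction n as [|n IH]; intros [|k]; try (simpl; lia).
  change (choose (S n) (S k)) with (choose n k + choose n (S k))%nat.
  change (fact (S k)) with (S k * fact k)%nat.
  pose proof (IH k). pose proof (IH (S k)) as Hk.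
  change (fact (S k)) with (S k * fact k)%nat in Hk.
  pose proof (pow_succ_bernoulli n k).
  nia.
Qed.

Lemma exp_pow (x : R) (n : nat) : exp x ^ n = exp (INR n * x).
Proof.
  induction n as [|n IH].
  - simpl. rewrite Rmult_0_l, exp_0. reflexivity.
  - rewrite S_INR. simpl pow. rewrite IH, <- exp_plus. f_equal. ring.
Qed.

(* (k+1)^k <= e k^k, i.e. (1 + 1/k)^k <= e, from 1 + 1/k <= exp (1/k). *)
Lemma succ_pow_le_exp (k : nat) : INR (S k) ^ k <= exp 1 * INR k ^ k.
Proof.
  destruct k as [|k]; [simpl; pose proof (exp_ineq1_le 1); lra|].
  set (K := INR (S k)).
  assert (HK : 0 < K) by (apply lt_0_INR; lia).
  assert (Hstep : INR (S (S k)) <= K * exp (1 / K)).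
  { rewrite S_INR. fold K. pose proof (exp_ineq1_le (1 / K)).
    replace (K + 1) with (K * (1 + 1 / K)) by (field; lra).
    apply Rmult_le_compat_l; lra. }
  assert (Hpow := pow_incr _ _ (S k) (conj (pos_INR _) Hstep)).
  rewrite Rpow_mult_distr, exp_pow in Hpow. fold K in Hpow.
  replace (K * (1 / K)) with 1 in Hpow by (field; lra).
  lra.
Qed.

Lemma pow_le_exp_fact (k : nat) : INR k ^ k <= exp 1 ^ k * INR (fact k).
Proof.
  induction k as [|k IH]; [simpl; lra|].
  pose proof (succ_pow_le_exp k) as Hstep.
  pose proof (pos_INR (S k)). pose proof (exp_pos 1).
  change (fact (S k)) with (S k * fact k)%nat. rewrite mult_INR.
  change (INR (S k) ^ S k) with (INR (S k) * INR (S k) ^ k).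
  change (exp 1 ^ S k) with (exp 1 * exp 1 ^ k).
  apply Rle_trans with (INR (S k) * (exp 1 * INR k ^ k)).
  - now apply Rmult_le_compat_l.
  - replace (exp 1 * exp 1 ^ k * (INR (S k) * INR (fact k)))
      with (INR (S k) * (exp 1 * (exp 1 ^ k * INR (fact k)))) by ring.
    apply Rmult_le_compat_l; [lra|]. apply Rmult_le_compat_l; lra.
Qed.

(* The standard estimate C(n,k) <= (e n / k)^k, multiplied out. *)
Lemma choose_pow_le (n k : nat) :
  INR (choose n k) * INR k ^ k <= (exp 1 * INR n) ^ k.
Proof.
  pose proof (le_INR _ _ (choose_mul_fact_le n k)) as Hc.
  rewrite mult_INR, pow_INR in Hc.
  pose proof (pow_le_exp_fact k) as Hf.
  pose proof (pos_INR (choose n k)). pose proof (pow_le (exp 1) k (Rlt_le _ _ (exp_pos 1))).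
  rewrite Rpow_mult_distr.
  apply Rle_trans with (INR (choose n k) * (exp 1 ^ k * INR (fact k))).
  - now apply Rmult_le_compat_l.
  - replace (INR (choose n k) * (exp 1 ^ k * INR (fact k)))
      with (exp 1 ^ k * (INR (choose n k) * INR (fact k))) by ring.
    now apply Rmult_le_compat_l.
Qed.

Lemma pow_lt_compat_l (x y : R) (n : nat) :
  0 <= x < y -> n <> 0%nat -> x ^ n < y ^ n.
Proof.
  intros [Hx Hxy] Hn. destruct n as [|n]; [lia|]. clear Hn.
  induction n as [|n IH]; [simpl; lra|].
  change (x ^ S (S n)) with (x * x ^ S n). change (y ^ S (S n)) with (y * y ^ S n).
  pose proof (pow_le x (S n) Hx).
  apply Rle_lt_trans with (y * x ^ S n).
  - apply Rmult_le_compat_r; lra.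
  - apply Rmult_lt_compat_l; lra.
Qed.

Lemma base_lt (M D : R) :
  1 <= D -> 2 * D <= M ->
  5 * exp 1 * (M + D) < (3 * exp 1 * M / D) ^ 2 * D.
Proof.
  intros HD HMD.
  assert (He : 2 < exp 1) by (pose proof (exp_ineq1 1); lra).
  replace ((3 * exp 1 * M / D) ^ 2 * D) with (9 * exp 1 * exp 1 * M * M / D)
    by (field; lra).
  apply Rmult_lt_reg_r with D; [lra|].
  replace (9 * exp 1 * exp 1 * M * M / D * D) with (9 * exp 1 * exp 1 * M * M)
    by (field; lra).
  assert (5 * D * (M + D) < 9 * exp 1 * M * M) by nra.
  nra.
Qed.

Lemma edit_count_estimate (m d : nat) (N : R) :
  (1 <= d)%nat -> (2 * d <= m)%nat ->
  N <= 5 ^ d * INR (choose (m + d) d) ->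
  N < (3 * exp 1 * INR m / INR d) ^ (2 * d).
Proof.
  intros Hd Hdm HN.
  assert (HD : 1 <= INR d) by (apply (le_INR 1); exact Hd).
  assert (HMD : 2 * INR d <= INR m)
    by (replace 2 with (INR 2) by (simpl; lra); rewrite <- mult_INR; apply le_INR; exact Hdm).
  assert (Hdpow : 0 < INR d ^ d) by (apply pow_lt; lra).
  pose proof (choose_pow_le (m + d) d) as Hchoose. rewrite plus_INR in Hchoose.
  pose proof (base_lt _ _ HD HMD) as Hbase.
  assert (Hbase_pow : (5 * exp 1 * (INR m + INR d)) ^ d
                      < ((3 * exp 1 * INR m / INR d) ^ 2 * INR d) ^ d).
  { apply pow_lt_compat_l; [split|lia]; [|exact Hbase].
    pose proof (exp_pos 1). nra. }
  rewrite (Rpow_mult_distr ((3 * exp 1 * INR m / INR d) ^ 2)), <- pow_mult in Hbase_pow.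
  apply Rmult_lt_reg_r with (INR d ^ d); [exact Hdpow|].
  apply Rle_lt_trans with (5 ^ d * (INR (choose (m + d) d) * INR d ^ d)).
  - rewrite <- Rmult_assoc. apply Rmult_le_compat_r; lra.
  - eapply Rle_lt_trans; [|exact Hbase_pow].
    rewrite Rmult_assoc, Rpow_mult_distr.
    apply Rmult_le_compat_l; [apply pow_le; lra | exact Hchoose].
Qed.

Theorem mainTheorem9 (m d : nat) (r : list R) (L : list (list R)) :
  (0 < m)%nat -> (4 <= d)%nat -> (2 * d <= m)%nat ->
  in_T m r ->
  NoDup L ->
  (forall s, In s L <->
     (in_T m s /\ s <> r /\ exists v, erp_is r s v /\ v <= INR d)) ->
  INR (length L) < (3 * exp 1 * INR m / INR d) ^ (2 * d).
Proof.
  intros _ Hd Hdm [Hlen Fr] Hnodup HL.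
  assert (Hincl : incl L (edit_ball d r)).
  { intros s Hs.
    apply HL in Hs as [[_ Fs] [_ [v [[[p [rt [st [Hcand Hv]]]] _] Hvd]]]].
    destruct Hcand as [_ [Gr [Hrt [Gs Hst]]]].
    apply (alignment_in_edit_ball rt st); auto; [congruence | lra]. }
  apply edit_count_estimate; [lia | exact Hdm |].
  rewrite <- Hlen.
  pose proof (edit_ball_length d r) as Hball.
  apply le_INR in Hball. rewrite mult_INR, pow_INR in Hball.
  pose proof (le_INR _ _ (NoDup_incl_length Hnodup Hincl)) as Hsub.
  replace (INR 5) with 5 in Hball by (simpl; lra). lra.
Qed.
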